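(* In the setting described in the context, suppose $p_i,p_j,p_k,p_l\in S_1$ satisfy $d(p_i,p_k)\ne d(p_j,p_l)$. If $C_2$ is a line, then $|C_{ij}\cap C_{kl}|\le4$.
   Context: A plane algebraic curve is an infinite set $Z_{\mathbb{R}}(f)=\{(a,b)\in\mathbb{R}^2:f(a,b)=0\}$ for a nonzero $f\in\mathbb{R}[x,y]$; its degree is the minimal degree of such $f$; it is irreducible if $f$ can be chosen irreducible over $\mathbb{R}$. Setting: $d\ge1$; $C_1=Z_{\mathbb{R}}(f_1)$ and $C_2=Z_{\mathbb{R}}(f_2)$ are irreducible plane algebraic curves of degree at most $d$ (possibly equal), with $f_1,f_2$ of minimum degree. $S_1=\{p_1,\dots,p_m\}\subset C_1$ and $S_2=\{q_1,\dots,q_n\}\subset C_2$ are sets of distinct points, $p_i=(a_i,b_i)$, satisfying: (1) neither $C_1$ nor $C_2$ is a vertical line; (2) $S_1\cap S_2=\emptyset$; (3) if $C_1$ (resp. $C_2$) is a circle, its center is not in $S_2$ (resp. $S_1$); (4) if $C_1$ (resp. $C_2$) is a circle, every concentric circle contains at most one point of $S_2$ (resp. $S_1$); (5) if $C_1$ (resp. $C_2$) is a line, then for every line $\ell$ parallel to it, the union of $\ell$ and its reflection in $C_1$ (resp. $C_2$) contains at most one point of $S_2$ (resp. $S_1$); (6) if $C_1$ (resp. $C_2$) is a line, every orthogonal line contains at most one point of $S_2$ (resp. $S_1$). For $1\le i,j\le m$, $C_{ij}\subset\mathbb{R}^4$ is the set of $(x,y,x',y')$ with $f_2(x,y)=0$,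 $f_2(x',y')=0$ and $(x-a_i)^2+(y-b_i)^2=(x'-a_j)^2+(y'-b_j)^2$. $d(\cdot,\cdot)$ is Euclidean distance. *)

From mathcomp Require Import all_boot all_algebra.
From mathcomp Require Import reals.
From mathcomp Require Import mpoly.

Set Implicit Arguments.
Unset Strict Implicit.
Unset Printing Implicit Defensive.

Import GRing.Theory Num.Theory.
Local Open Scope ring_scope.

Section Defs.
Variable R : realType.

Definition pt := (R * R)%type.

Definition peval (f : {mpoly R[2]}) (p : pt) : R :=
  f.@[fun i : 'I_2 => if val i == 0%N then p.1 else p.2].

Definition Zset (f : {mpoly R[2]}) : pt -> Prop := fun p => peval f p = 0.

Definition set_eq (A B : pt -> Prop) : Prop := forall p, A p <-> B p.

Definition infinite_set (A : pt -> Prop) : Prop :=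
  forall s : seq pt, exists p, A p /\ p \notin s.

(* total degree of a nonzero polynomial (msize f = 1 + degree) *)
Definition mdegree (f : {mpoly R[2]}) : nat := (msize f).-1.

Definition irreducible_mpoly (f : {mpoly R[2]}) : Prop :=
  (1 < msize f)%N /\
  forall g h : {mpoly R[2]}, f = g * h -> (msize g <= 1)%N \/ (msize h <= 1)%N.

Definition min_def_poly (C : pt -> Prop) (f : {mpoly R[2]}) : Prop :=
  f != 0 /\ set_eq C (Zset f) /\
  forall g : {mpoly R[2]}, g != 0 -> set_eq (Zset g) C -> (mdegree f <= mdegree g)%N.

Definition irred_curve_le (d : nat) (f : {mpoly R[2]}) : Prop :=
  min_def_poly (Zset f) f /\
  infinite_set (Zset f) /\
  (exists g : {mpoly R[2]}, irreducible_mpoly g /\ set_eq (Zset g) (Zset f)) /\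
  (mdegree f <= d)%N.

Definition line_eq (a b c : R) : pt -> Prop := fun p => a * p.1 + b * p.2 = c.

Definition is_line (C : pt -> Prop) : Prop :=
  exists a b c : R, (a != 0 \/ b != 0) /\ set_eq C (line_eq a b c).

Definition is_vertical_line (C : pt -> Prop) : Prop :=
  exists c : R, set_eq C (fun p => p.1 = c).

Definition circle (c : pt) (r : R) : pt -> Prop :=
  fun p => (p.1 - c.1) ^+ 2 + (p.2 - c.2) ^+ 2 = r ^+ 2.

Definition reflect_in_line (a b c : R) (p : pt) : pt :=
  let t := (a * p.1 + b * p.2 - c) / (a ^+ 2 + b ^+ 2) in
  (p.1 - 2 * a * t, p.2 - 2 * b * t).

Definition at_most_one (n : nat) (A : pt -> Prop) (q : 'I_n -> pt) : Prop :=
  forall j j' : 'I_n, A (q j) -> A (q j') -> q j = q j'.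

(* conditions (1),(3),(4),(5),(6) for the curve C (the one containing S)
   with respect to the other point set T = {q_j} *)
Definition curve_conditions (C : pt -> Prop) (n : nat) (q : 'I_n -> pt) : Prop :=
  ~ is_vertical_line C /\
  (forall (c : pt) (r : R), 0 < r -> set_eq C (circle c r) ->
     forall j : 'I_n, q j <> c) /\
  (forall (c : pt) (r : R), 0 < r -> set_eq C (circle c r) ->
     forall r' : R, 0 < r' -> at_most_one (circle c r') q) /\
  (* (5) : every line parallel to C, united with its reflection in C *)
  (forall a b c : R, (a != 0 \/ b != 0) -> set_eq C (line_eq a b c) ->
     forall c' : R,
       at_most_one (fun x => line_eq a b c' x \/
                     exists y, line_eq a b c' y /\ x = reflect_in_line a b c y) q) /\
  (* (6) : every line orthogonal to C *)
  (forall a b c : R, (a != 0 \/ b != 0) -> set_eq C (line_eq a b c) ->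
     forall c' : R, at_most_one (line_eq (- b) a c') q).

Definition setting (d : nat) (f1 f2 : {mpoly R[2]})
    (m n : nat) (p : 'I_m -> pt) (q : 'I_n -> pt) : Prop :=
  (1 <= d)%N /\
  irred_curve_le d f1 /\ irred_curve_le d f2 /\
  (forall i, Zset f1 (p i)) /\ injective p /\
  (forall j, Zset f2 (q j)) /\ injective q /\
  (forall i j, p i <> q j) /\
  curve_conditions (Zset f1) q /\ curve_conditions (Zset f2) p.

Definition Cset (f2 : {mpoly R[2]}) (pi pj : pt) : pt * pt -> Prop :=
  fun z => Zset f2 z.1 /\ Zset f2 z.2 /\
    (z.1.1 - pi.1) ^+ 2 + (z.1.2 - pi.2) ^+ 2 =
    (z.2.1 - pj.1) ^+ 2 + (z.2.2 - pj.2) ^+ 2.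

Definition dist (u v : pt) : R := Num.sqrt ((u.1 - v.1) ^+ 2 + (u.2 - v.2) ^+ 2).

(* |A| <= k for a subset A of R^4 (possibly infinite a priori) *)
Definition card_le (A : pt * pt -> Prop) (k : nat) : Prop :=
  forall s : seq (pt * pt), uniq s -> (forall z, z \in s -> A z) -> (size s <= k)%N.

End Defs.

(* Write points of the line C2 : a x + b y = c in the coordinate w = -b x + a y
   along it, and measure the offset g = a x + b y - c of any point from it.
   For z on C2, (a^2 + b^2) |z - P|^2 = (w z - w P)^2 + (g P)^2, so every
   (z, z') in C_ij /\ C_kl gives (s, t) = (w z, w z') on the two curves
   (s - w p_i)^2 + (g p_i)^2 = (t - w p_j)^2 + (g p_j)^2 and the analogous one
   for k, l. Their difference is the linear equation
   2 (w p_k - w p_i) s + 2 (w p_j - w p_l) t = const. It is degenerate only if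
   w p_i = w p_k and w p_j = w p_l, which by condition (6) forces p_i = p_k and
   p_j = p_l. Otherwise three intersection points would put three points of
   (s - u)^2 - (t - v)^2 = G on a line, which forces G = 0, i.e.
   (g p_i)^2 = (g p_j)^2 and (g p_k)^2 = (g p_l)^2; by condition (5) this means
   p_i = p_j and p_k = p_l. Either way d(p_i, p_k) = d(p_j, p_l), so in fact
   the intersection has at most two points. *)

From mathcomp Require Import all_boot all_algebra.
From mathcomp Require Import reals.
From mathcomp Require Import mpoly.
From mathcomp Require Import ring.

Set Implicit Arguments.
Unset Strict Implicit.
Unset Printing Implicit Defensive.

Import GRing.Theory Num.Theory.
Local Open Scope ring_scope.

Lemma quadratic_coefs_eq0 (R : idomainType) (al be ga : R) (ts : seq R) :
  uniq ts -> (2 < size ts)%N ->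
  (forall t, t \in ts -> al * t ^+ 2 + be * t + ga = 0) ->
  [/\ al = 0, be = 0 & ga = 0].
Proof.
move=> uts hts hroots.
pose P := Poly [:: ga; be; al].
have P0 : P = 0.
  apply/eqP; apply: contraTT hts => /max_poly_roots hP; rewrite -leqNgt.
  have rootsP : all (root P) ts.
    apply/allP => t /hroots h; rewrite /root horner_Poly /=.
    by apply/eqP; rewrite -[RHS]h; ring.
  exact: leq_trans (hP _ rootsP uts) (size_Poly _).
have coefP0 r : P`_r = 0 by rewrite P0 coef0.
by split; [move: (coefP0 2%N) | move: (coefP0 1%N) | move: (coefP0 0%N)];
  rewrite coef_Poly.
Qed.

Lemma hyperbola_affine_roots (R : numDomainType) (m e u v G1 G2 : R) (ts : seq R) :
  uniq ts -> (2 < size ts)%N ->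
  (forall t, t \in ts -> (m * t + e - u) ^+ 2 + G1 = (t - v) ^+ 2 + G2) ->
  G1 = G2.
Proof.
move=> uts hts hyp.
have quad t : t \in ts -> (m ^+ 2 - 1) * t ^+ 2 + 2 * (v + m * (e - u)) * t
    + ((e - u) ^+ 2 - v ^+ 2 + (G1 - G2)) = 0.
  move=> /hyp h.
  have -> : (m ^+ 2 - 1) * t ^+ 2 + 2 * (v + m * (e - u)) * t
      + ((e - u) ^+ 2 - v ^+ 2 + (G1 - G2)) =
      ((m * t + e - u) ^+ 2 + G1) - ((t - v) ^+ 2 + G2) by ring.
  by rewrite h subrr.
have [hm hv hG] := quadratic_coefs_eq0 uts hts quad.
move/eqP: hv; rewrite mulf_eq0 pnatr_eq0 /= addr_eq0 => /eqP hv.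
apply/eqP; rewrite -subr_eq0; apply/eqP.
have -> : G1 - G2 = (e - u) ^+ 2 - v ^+ 2 + (G1 - G2) + (e - u) ^+ 2 * (m ^+ 2 - 1).
  by rewrite hv; ring.
by rewrite hG hm mulr0 addr0.
Qed.

Lemma line_hyperbola_points (R : numFieldType) (A B c u v G1 G2 : R) (s : seq (R * R)) :
  A != 0 \/ B != 0 -> uniq s -> (2 < size s)%N ->
  (forall z, z \in s ->
     A * z.1 + B * z.2 = c /\ (z.1 - u) ^+ 2 + G1 = (z.2 - v) ^+ 2 + G2) ->
  G1 = G2.
Proof.
wlog hA : A B u v G1 G2 s / A != 0.
  move=> hwlog hAB us hs hz; case: hAB => [hA|hB].
    exact: hwlog hA (or_introl hA) us hs hz.
  symmetry; apply: (hwlog B A v u G2 G1 (map swap_pair s) hB (or_introl hB)).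
  - by rewrite map_inj_uniq //; apply: can_inj swap_pairK.
  - by rewrite size_map.
  - move=> _ /mapP [z /hz [hl hh] ->] /=; split; [by rewrite addrC | exact: esym hh].
move=> _ us hs hz.
have on_line z : z \in s -> z.1 = - (B / A) * z.2 + c / A.
  by case/hz=> <- _; field.
apply: (@hyperbola_affine_roots _ (- (B / A)) (c / A) u v G1 G2 (map snd s)).
- rewrite map_inj_in_uniq // => -[z1 z2] [z1' z2'] zs zs' /= e2.
  by move: (on_line _ zs) (on_line _ zs') => /= -> ->; rewrite e2.
- by rewrite size_map.
- by move=> _ /mapP [z zs ->]; rewrite -on_line //; case: (hz z zs).
Qed.

Lemma hyperbola_eqs_sub (R : comPzRingType) (x y u v u' v' G1 G2 G1' G2' : R) :
  (x - u) ^+ 2 + G1 = (y - v) ^+ 2 + G2 ->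
  (x - u') ^+ 2 + G1' = (y - v') ^+ 2 + G2' ->
  2 * (u' - u) * x + 2 * (v - v') * y =
  (v ^+ 2 - v' ^+ 2 + (G2 - G2')) - (u ^+ 2 - u' ^+ 2 + (G1 - G1')).
Proof.
move=> e e'; apply/eqP; rewrite -subr_eq0; apply/eqP.
have -> : 2 * (u' - u) * x + 2 * (v - v') * y -
    ((v ^+ 2 - v' ^+ 2 + (G2 - G2')) - (u ^+ 2 - u' ^+ 2 + (G1 - G1'))) =
    ((x - u) ^+ 2 + G1 - ((y - v) ^+ 2 + G2)) -
    ((x - u') ^+ 2 + G1' - ((y - v') ^+ 2 + G2')) by ring.
by rewrite e e' !subrr.
Qed.

Definition sqdist (R : realType) (u v : pt R) : R :=
  (u.1 - v.1) ^+ 2 + (u.2 - v.2) ^+ 2.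

Section LineCoordinates.
Variables (R : realType) (a b c : R).
Hypothesis hab : a != 0 \/ b != 0.

Definition line_coord (x : pt R) : R := - b * x.1 + a * x.2.
Definition line_offset (x : pt R) : R := a * x.1 + b * x.2 - c.

Lemma line_normal_neq0 : a ^+ 2 + b ^+ 2 != 0.
Proof.
rewrite paddr_eq0 ?sqr_ge0 // !sqrf_eq0 negb_and.
by case: hab => ->; rewrite ?orbT.
Qed.

Lemma sqdist_line (z P : pt R) : line_eq a b c z ->
  (a ^+ 2 + b ^+ 2) * sqdist z P =
  (line_coord z - line_coord P) ^+ 2 + line_offset P ^+ 2.
Proof.
move=> hz; have -> : line_offset P = line_offset P - line_offset z.
  by rewrite /line_offset hz subrr subr0.
by rewrite /sqdist /line_coord /line_offset; ring.
Qed.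

Lemma line_coord_inj (P Q : pt R) : line_eq a b c P -> line_eq a b c Q ->
  line_coord P = line_coord Q -> P = Q.
Proof.
move=> hP hQ hPQ; have hN := line_normal_neq0.
have e1 : (a ^+ 2 + b ^+ 2) * (P.1 - Q.1) =
    a * (line_offset P - line_offset Q) - b * (line_coord P - line_coord Q).
  by rewrite /line_coord /line_offset; ring.
have e2 : (a ^+ 2 + b ^+ 2) * (P.2 - Q.2) =
    b * (line_offset P - line_offset Q) + a * (line_coord P - line_coord Q).
  by rewrite /line_coord /line_offset; ring.
rewrite /line_offset hP hQ hPQ !subrr !mulr0 subrr in e1 e2.
move/eqP: e1; rewrite mulf_eq0 (negbTE hN) subr_eq0 => /eqP e1.
move/eqP: e2; rewrite addr0 mulf_eq0 (negbTE hN) subr_eq0 => /eqP e2.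
by case: P Q e1 e2 {hP hQ hPQ} => [? ?] [? ?] /= -> ->.
Qed.

Lemma line_eq_offset (x y : pt R) :
  line_offset y = line_offset x -> line_eq a b (a * x.1 + b * x.2) y.
Proof. by rewrite /line_offset /line_eq => /(congr1 (+%R^~ c)); rewrite !subrK. Qed.

Lemma reflect_in_lineK : involutive (reflect_in_line a b c).
Proof.
have hN := line_normal_neq0.
by case=> x1 x2; rewrite /reflect_in_line /=; congr (_, _); field.
Qed.

Lemma line_offset_reflect (x : pt R) :
  line_offset (reflect_in_line a b c x) = - line_offset x.
Proof.
have hN := line_normal_neq0.
by case: x => x1 x2; rewrite /reflect_in_line /line_offset /=; field.
Qed.

Lemma equidistant_line_points (P Q z z' : pt R) :
  line_eq a b c z -> line_eq a b c z' -> sqdist z P = sqdist z' Q ->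
  (line_coord z - line_coord P) ^+ 2 + line_offset P ^+ 2 =
  (line_coord z' - line_coord Q) ^+ 2 + line_offset Q ^+ 2.
Proof. by move=> hz hz' e; rewrite -!sqdist_line // e. Qed.

End LineCoordinates.

Section EquidistantPairs.
Variables (R : realType) (a b c : R).
Hypothesis hab : a != 0 \/ b != 0.

Lemma line_equidistant_pairs (P Q P' Q' : pt R) (s : seq (pt R * pt R)) :
  uniq s -> (2 < size s)%N ->
  (forall z, z \in s -> [/\ line_eq a b c z.1, line_eq a b c z.2,
      sqdist z.1 P = sqdist z.2 Q & sqdist z.1 P' = sqdist z.2 Q']) ->
  (line_coord a b P = line_coord a b P' /\ line_coord a b Q = line_coord a b Q') \/
  (line_offset a b c P ^+ 2 = line_offset a b c Q ^+ 2 /\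
   line_offset a b c P' ^+ 2 = line_offset a b c Q' ^+ 2).
Proof.
move=> us hs hz.
pose coords (z : pt R * pt R) := (line_coord a b z.1, line_coord a b z.2).
have ucoords : uniq (map coords s).
  rewrite map_inj_in_uniq // => -[z1 z2] [z1' z2'].
  move=> /hz[/= h1 h2 _ _] /hz[/= h1' h2' _ _] [/= e1 e2].
  by rewrite (line_coord_inj hab h1 h1' e1) (line_coord_inj hab h2 h2' e2).
have scoords : (2 < size (map coords s))%N by rewrite size_map.
set cP := line_coord a b P; set cQ := line_coord a b Q.
set cP' := line_coord a b P'; set cQ' := line_coord a b Q'.
have hyp w : w \in map coords s ->
  (w.1 - cP) ^+ 2 + line_offset a b c P ^+ 2 =
    (w.2 - cQ) ^+ 2 + line_offset a b c Q ^+ 2 /\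
  (w.1 - cP') ^+ 2 + line_offset a b c P' ^+ 2 =
    (w.2 - cQ') ^+ 2 + line_offset a b c Q' ^+ 2.
  by move=> /mapP [z /hz [h1 h2 e e'] ->]; split; exact: equidistant_line_points.
have [[eP eQ]|hAB] : (cP = cP' /\ cQ = cQ') \/
    (2 * (cP' - cP) != 0 \/ 2 * (cQ - cQ') != 0).
  rewrite !mulf_eq0 !pnatr_eq0 !subr_eq0 /=.
  case: (eqVneq cP cP') => [->|nP]; last by right; left.
  by case: (eqVneq cQ cQ') => [->|nQ]; [left | right; right].
- by left.
- right; split.
  + apply: (line_hyperbola_points (u := cP) (v := cQ) hAB ucoords scoords).
    by move=> w /hyp[e e']; split; [exact: hyperbola_eqs_sub e e' | exact: e].
  + apply: (line_hyperbola_points (u := cP') (v := cQ') hAB ucoords scoords).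
    by move=> w /hyp[e e']; split; [exact: hyperbola_eqs_sub e e' | exact: e'].
Qed.

End EquidistantPairs.

Section LineConditions.
Variables (R : realType) (C : pt R -> Prop) (a b c : R) (n : nat) (q : 'I_n -> pt R).
Hypotheses (hab : a != 0 \/ b != 0) (hC : set_eq C (line_eq a b c)).
Hypothesis cond : curve_conditions C q.

Lemma line_coord_points_inj (x y : 'I_n) :
  line_coord a b (q x) = line_coord a b (q y) -> q x = q y.
Proof.
case: cond => [_ [_ [_ [_ orth]]]] e.
exact: (orth a b c hab hC (line_coord a b (q x))).
Qed.

Lemma line_offset_points_inj (x y : 'I_n) :
  line_offset a b c (q x) ^+ 2 = line_offset a b c (q y) ^+ 2 -> q x = q y.
Proof.
case: cond => [_ [_ [_ [par _]]]].
move/eqP; rewrite eqf_sqr => /orP[] /eqP e;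
  apply: (par a b c hab hC (a * (q x).1 + b * (q x).2)); do ?by left.
- by left; apply: (@line_eq_offset _ a b c); rewrite e.
- right; exists (reflect_in_line a b c (q y)).
  split; last by rewrite (reflect_in_lineK c hab).
  by apply: (@line_eq_offset _ a b c); rewrite (line_offset_reflect c hab) e.
Qed.

End LineConditions.

Lemma card_le_leq (R : realType) (A : pt R * pt R -> Prop) (k k' : nat) :
  card_le A k -> (k <= k')%N -> card_le A k'.
Proof. by move=> hA hk s us hs; exact: leq_trans (hA s us hs) hk. Qed.

Lemma dist_xx (R : realType) (x : pt R) : dist x x = 0.
Proof. by rewrite /dist !subrr expr0n addr0 sqrtr0. Qed.

Theorem lemma4p4 (R : realType) (d : nat) (f1 f2 : {mpoly R[2]})
    (m n : nat) (p : 'I_m -> pt R) (q : 'I_n -> pt R)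
    (i j k l : 'I_m) :
  setting d f1 f2 p q ->
  dist (p i) (p k) != dist (p j) (p l) ->
  is_line (Zset f2) ->
  card_le (fun z => Cset f2 (p i) (p j) z /\ Cset f2 (p k) (p l) z) 4.
Proof.
move=> [_ [_ [_ [_ [_ [_ [_ [_ [_ cond]]]]]]]]] hdist [a [b [c [hab hC]]]].
apply: (@card_le_leq _ _ 2) => // s us hs; rewrite leqNgt; apply/negP => s_gt2.
have on_line z : z \in s -> [/\ line_eq a b c z.1, line_eq a b c z.2,
    sqdist z.1 (p i) = sqdist z.2 (p j) & sqdist z.1 (p k) = sqdist z.2 (p l)].
  by move=> /hs [[/hC h1 [/hC h2 e]] [_ [_ e']]].
case: (line_equidistant_pairs hab us s_gt2 on_line) => [[eik ejl]|[eij ekl]].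
- move: hdist; rewrite (line_coord_points_inj hab hC cond eik).
  by rewrite (line_coord_points_inj hab hC cond ejl) !dist_xx eqxx.
- move: hdist; rewrite (line_offset_points_inj hab hC cond eij).
  by rewrite (line_offset_points_inj hab hC cond ekl) eqxx.
Qed.
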